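(* $K_{10}$ and $K_{12}-C_{12}$ both have vertex connectivity $9$ and orientable genus $4$. $K_{14}$ and $K_{15}-6K_2$ both have vertex connectivity $13$ and orientable genus $10$. In particular, $K_{10}$ is not the unique graph with vertex connectivity 9 and genus 4, and $K_{14}$ is not the unique graph with vertex connectivity 13 and genus 10.
   Context: $K_{12}-C_{12}$ is $K_{12}$ with the edges of a Hamiltonian cycle removed. $K_{15}-6K_2$ is $K_{15}$ with the edges of a matching of size 6 removed. Genus means the minimum orientable genus of a surface in which the graph embeds. *)

From HB Require Import structures.
From mathcomp Require Import all_boot.
From mathcomp Require Import fingroup perm.
Set Implicit Arguments. Unset Strict Implicit. Unset Printing Implicit Defensive.

Section Graphs.
Variable T : finType.
Implicit Types (e : rel T).

Definition simple_graph e : Prop := symmetric e /\ irreflexive e.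

Definition connected_minus e (X : {set T}) : Prop :=
  forall x y, x \notin X -> y \notin X ->
    connect [rel a b | [&& e a b, a \notin X & b \notin X]] x y.

Definition k_connected e (k : nat) : Prop :=
  k < #|T| /\ forall X : {set T}, #|X| < k -> connected_minus e X.

Definition vertex_connectivity e (k : nat) : Prop :=
  k_connected e k /\ ~ k_connected e k.+1.

Definition dart e (d : T * T) : bool := e d.1 d.2.

Definition rotation_system e (rho : {perm T * T}) : Prop :=
  [/\ forall d, ~~ dart e d -> rho d = d,
      forall d, dart e d -> dart e (rho d) /\ (rho d).1 = d.1
    & forall d1 d2, dart e d1 -> dart e d2 -> d1.1 = d2.1 -> fconnect rho d1 d2].

Definition face_perm e (rho : {perm T * T}) (d : T * T) : T * T :=
  if dart e d then rho (d.2, d.1) else d.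

(* faces of the induced cellular embedding: orbits of face_perm on darts,
   plus one face for each isolated vertex *)
Definition num_faces e (rho : {perm T * T}) : nat :=
  #|[set [set y | fconnect (face_perm e rho) x y] | x in [set d | dart e d]]|
  + #|[set v | [forall w, ~~ e v w]]|.

Definition num_components e : nat := #|[set [set y | connect e x y] | x : T]|.

(* Euler: for an embedding with c components, V - E + F = 2c - 2g, i.e.
   4g + 2V + 2F = 4c + 2E = 4c + #darts *)
Definition embedding_genus e (rho : {perm T * T}) (g : nat) : Prop :=
  4 * g + 2 * #|T| + 2 * num_faces e rho = 4 * num_components e + #|[set d | dart e d]|.

Definition has_genus e (g : nat) : Prop :=
  (exists rho, rotation_system e rho /\ embedding_genus e rho g) /\
  (forall rho g', rotation_system e rho -> embedding_genus e rho g' -> g <= g').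

End Graphs.

Definition graph_iso (T1 T2 : finType) (e1 : rel T1) (e2 : rel T2) : Prop :=
  exists f : T1 -> T2, bijective f /\ forall x y, e2 (f x) (f y) = e1 x y.

Definition K (n : nat) : rel 'I_n := fun i j => i != j.
Arguments K n : clear implicits.

Definition K12_minus_C12 : rel 'I_12 :=
  fun i j => [&& i != j, (i.+1 %% 12 != j) & (j.+1 %% 12 != i)].

(* K_15 minus the perfect matching {0,1},{2,3},...,{10,11} of size 6 *)
Definition K15_minus_6K2 : rel 'I_15 :=
  fun i j => (i != j) && ~~ [&& i./2 == j./2, i < 12 & j < 12].

From mathcomp Require Import all_boot.
From mathcomp Require Import fingroup perm.
From mathcomp Require Import zmodp zify.
Set Implicit Arguments. Unset Strict Implicit. Unset Printing Implicit Defensive.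

(* Vertex connectivity: a vertex of degree k shows that the graph is not
   (k+1)-connected.  Conversely, two distinct non-adjacent vertices of
   K15 - 6K2 have 13 common neighbours, and the vertices i, i+1 of K12 - C12
   have 8 common neighbours and are also joined by the path i, i+2, i-1, i+1
   avoiding them; by the easy half of Menger's theorem no smaller vertex set
   separates them (in K10 and K14 any two vertices are adjacent).
   Genus: in a simple graph of minimum degree at least 2 every face of a
   rotation system has length at least 3, so Euler's formula gives
   12 g >= 2 E - 6 V + 12 for a connected graph.  Explicit rotation systems of
   the four graphs attain this bound; their faces are traced and counted by
   computation.  Finally K12 - C12 and K15 - 6K2 have more vertices than K10
   and K14. *)

Lemma enum_ordE n : enum 'I_n.+1 = [seq inZp i | i <- iota 0 n.+1].
Proof. by rewrite -val_enum_ord -map_comp map_id_in // => i _; rewrite /= valZpK. Qed.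

Section Enumeration.
Variable T : finType.

Lemma forall_enum (P : pred T) : all P (enum T) -> forall x, P x.
Proof. by move=> /allP P_enum x; apply: P_enum; rewrite mem_enum. Qed.

Lemma card_set_count (P : pred T) : #|[set x | P x]| = count P (enum T).
Proof.
rewrite -size_filter -(card_uniqP (filter_uniq P (enum_uniq T))).
by apply: eq_card => x; rewrite inE mem_filter mem_enum andbT.
Qed.

Lemma forall2_enum (P : T -> T -> bool) :
  all (fun x => all (P x) (enum T)) (enum T) -> forall x y, P x y.
Proof. by move=> /forall_enum P_enum x; apply: forall_enum. Qed.

Lemma simple_graph_enum (e : rel T) :
  all (fun x => ~~ e x x && all (fun y => e x y == e y x) (enum T)) (enum T) ->
  simple_graph e.
Proof.
move/forall_enum => e_simple; split => [x y | x].
- by have /andP[_ /forall_enum/(_ y)/eqP] := e_simple x.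
- by have /andP[/negbTE] := e_simple x.
Qed.

End Enumeration.

Section Connectivity.
Variables (T : finType) (e : rel T).
Implicit Types (X : {set T}) (x y : T).

Definition avoiding X : rel T := [rel a b | [&& e a b, a \notin X & b \notin X]].

Definition common_nbrs x y : seq T := [seq z <- enum T | e x z && e z y].

(* x = y, x ~ y, or x and y are joined by k internally disjoint paths of
   length 2 or 3. *)
Definition k_linked k x y : bool :=
  let C := common_nbrs x y in
  let A := [seq a <- enum T | e x a & a \notin C] in
  let B := [seq b <- enum T | e b y & b \notin C] in
  [|| x == y, e x y, k <= size C | (size C == k.-1) && has (fun a => has (e a) B) A].

Lemma connect_avoiding_common X x y z :
  x \notin X -> y \notin X -> z \notin X -> z \in common_nbrs x y ->
  connect (avoiding X) x y.
Proof.
rewrite mem_filter => xX yX zX /andP[/andP[xz zy] _].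
by apply: (@connect_trans _ _ z); apply: connect1; apply/and3P.
Qed.

Lemma k_linked_connect k X x y :
  #|X| < k -> x \notin X -> y \notin X -> k_linked k x y ->
  connect (avoiding X) x y.
Proof.
move=> Xk xX yX; rewrite /k_linked /=; set C := common_nbrs x y.
have C_uniq : uniq C := filter_uniq _ (enum_uniq T).
have [[z zC zX] | C_X] : (exists2 z, z \in C & z \notin X) \/ {subset C <= X}.
- by case: (boolP (all (mem X) C)) => [/allP | /allPn[z]]; [right | left; exists z].
- by move=> _; apply: connect_avoiding_common zX zC.
case/or4P => [/eqP-> | xy | kC | /andP[/eqP kC /hasP[a + /hasP[b + ab]]]].
- exact: connect0.
- by apply: connect1; apply/and3P.
- have C_enumX : {subset C <= enum X} by move=> z /C_X; rewrite mem_enum.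
  have := uniq_leq_size C_uniq C_enumX; rewrite -cardE => /(leq_trans kC).
  by rewrite leqNgt Xk.
- rewrite mem_filter => /andP[/andP[xa aC] _].
  rewrite mem_filter => /andP[/andP[b_y bC] _].
  have [_ C_eq] : (size C = size (enum X)) * (C =i enum X).
    apply: uniq_min_size => [|z /C_X|]; rewrite ?mem_enum //.
    by rewrite -cardE kC -ltnS (ltn_predK Xk).
  rewrite !C_eq !mem_enum in aC bC.
  apply: (@connect_trans _ _ a); first by apply: connect1; apply/and3P.
  by apply: (@connect_trans _ _ b); apply: connect1; apply/and3P.
Qed.

Lemma k_connected_linked k :
  k < #|T| -> (forall x y, k_linked k x y) -> k_connected e k.
Proof.
move=> kT linked; split=> // X Xk x y xX yX.
exact: k_linked_connect Xk xX yX (linked x y).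
Qed.

Hypothesis e_irr : irreflexive e.

Lemma k_connected_deg k x : k_connected e k -> k <= #|[set y | e x y]|.
Proof.
case=> kT conn; rewrite leqNgt; apply/negP => Nk.
have /subsetPn[y _] : ~~ ([set: T] \subset x |: [set y | e x y]).
  apply: contraL (leq_ltn_trans Nk kT) => /subset_leq_card.
  rewrite cardsT cardsU1 -leqNgt => /leq_trans; apply.
  by rewrite -add1n leq_add2r leq_b1.
rewrite !inE negb_or => /andP[yx xy].
have xN : x \notin [set y | e x y] by rewrite inE e_irr.
have yN : y \notin [set y | e x y] by rewrite inE.
have /connectP[[|z p] /=] := conn _ Nk x y xN yN.
- by move=> _ yx_eq; rewrite yx_eq eqxx in yx.
- by rewrite inE => /andP[/and3P[xz _]]; rewrite inE xz.
Qed.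

Lemma vertex_connectivity_deg k v :
  k < #|T| -> (forall x y, k_linked k x y) -> #|[set w | e v w]| <= k ->
  vertex_connectivity e k.
Proof.
move=> kT linked deg_v; split; first exact: k_connected_linked.
by move/(k_connected_deg v); rewrite ltnNge deg_v.
Qed.

Lemma k_connected_num_components k :
  0 < k -> k_connected e k -> num_components e = 1.
Proof.
move=> k_gt0 [kT conn]; have /card_gt0P[x0 _] := ltn_trans k_gt0 kT.
have e_conn x y : connect e x y.
  apply: connect_sub (conn set0 _ x y _ _); rewrite ?cards0 ?inE //.
  by move=> a b /and3P[ab _ _]; apply: connect1.
rewrite /num_components (_ : [set _ | x : T] = [set setT]) ?cards1 //.
apply/setP => A.
rewrite !inE; apply/imsetP/eqP => [[x _ ->] | ->].
- by apply/setP => y; rewrite !inE e_conn.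
- by exists x0 => //; apply/setP => y; rewrite !inE e_conn.
Qed.

End Connectivity.

Lemma no_isolated_vertices (T : finType) (e : rel T) :
  (forall v, 0 < #|[set w | e v w]|) -> #|[set v | [forall w, ~~ e v w]]| = 0.
Proof.
move=> deg_gt0; apply: eq_card0 => v; rewrite !inE; apply/negP => /forallP v_isolated.
by have /card_gt0P[w] := deg_gt0 v; rewrite inE (negbTE (v_isolated w)).
Qed.

Section Faces.
Variables (T : finType) (e : rel T).
Hypotheses (e_sym : symmetric e) (e_irr : irreflexive e).
Variable rho : {perm T * T}.
Hypothesis rho_rot : rotation_system e rho.
Local Notation phi := (face_perm e rho).

Lemma face_perm_dart d : dart e d -> dart e (phi d) /\ (phi d).1 = d.2.
Proof.
case: rho_rot => _ rho_dart _ dd; rewrite /face_perm dd.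
by apply: rho_dart; rewrite /dart /= e_sym.
Qed.

Lemma face_perm_inj : injective phi.
Proof.
move=> d1 d2; case: (boolP (dart e d1)) => d1d; case: (boolP (dart e d2)) => d2d.
- rewrite /face_perm d1d d2d => /perm_inj.
  by case: d1 d2 {d1d d2d} => [? ?] [? ?] [-> ->].
- move=> E; have := (face_perm_dart d1d).1.
  by rewrite E /face_perm (negbTE d2d) => /(negP d2d).
- move=> E; have := (face_perm_dart d2d).1.
  by rewrite -E /face_perm (negbTE d1d) => /(negP d1d).
- by rewrite /face_perm (negbTE d1d) (negbTE d2d).
Qed.

Lemma fconnect_face_dart d d' : dart e d -> fconnect phi d d' -> dart e d'.
Proof.
move=> dd /iter_findex <-; elim: (findex _ _ _) => //= n IHn.
exact: (face_perm_dart IHn).1.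
Qed.

Hypothesis deg2 : forall v, 1 < #|[set w | e v w]|.

(* phi (phi (u, v)) = (u, v) would make rho fix (v, u), i.e. give v degree 1. *)
Lemma face_perm2_neq d : dart e d -> phi (phi d) != d.
Proof.
case: d => u v uv; have [vw_dart vw_tail] := face_perm_dart uv.
case E: (phi (u, v)) vw_dart vw_tail => [v' w] vw_dart /= v'v; subst v'.
apply/eqP => loop; have := (face_perm_dart vw_dart).2; rewrite loop /= => wu; subst w.
move: E; rewrite /face_perm uv /= => rho_vu.
have /card_gt0P[z] : 0 < #|[set w | e v w] :\ u|.
  have := deg2 v; rewrite (cardsD1 u).
  by case: (u \in _); rewrite ?add1n ?add0n // => /ltnW.
rewrite !inE => /andP[zu vz].
case: rho_rot => _ _ /(_ (v, u) (v, z) vw_dart vz erefl).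
by move/iter_findex; rewrite iter_fix // => -[zu_eq]; rewrite zu_eq eqxx in zu.
Qed.

Lemma card_face_orbit_gt2 d : dart e d -> 2 < #|[set d' | fconnect phi d d']|.
Proof.
move=> dd; have d1 := (face_perm_dart dd).1.
have loopless d' : dart e d' -> phi d' != d'.
  move=> d'd; apply/eqP => E; have := (face_perm_dart d'd).2; rewrite E => E'.
  by move: d'd; rewrite /dart E' e_irr.
have orbit3_uniq : uniq [:: d; phi d; phi (phi d)].
  have n01 := loopless _ dd; have n12 := loopless _ d1; have n02 := face_perm2_neq dd.
  by rewrite /= !inE !negb_or [phi d == _]eq_sym ![d == _]eq_sym n01 n02 n12.
apply: (@leq_trans #|[:: d; phi d; phi (phi d)]|).
  by rewrite (card_uniqP orbit3_uniq).
apply/subset_leq_card/subsetP => d'.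
rewrite !inE => /or3P[] /eqP->; first exact: connect0.
- exact: (fconnect_iter _ 1).
- exact: (fconnect_iter _ 2).
Qed.

Lemma three_faces_le_darts :
  3 * #|[set [set d' | fconnect phi d d'] | d in [set d | dart e d]]|
    <= #|[set d | dart e d]|.
Proof.
set D := [set d | dart e d]; set P := [set _ | d in D].
have P_eq : P = equivalence_partition (fconnect phi) D.
  apply: eq_in_imset => d; rewrite inE => dd; apply/setP => d'.
  rewrite !inE; case: (boolP (fconnect phi d d')) => [dd' | _]; last by rewrite andbF.
  by rewrite (fconnect_face_dart dd dd').
have P_partition : partition P D.
  rewrite P_eq; apply: equivalence_partitionP => d1 d2 d3 _ _ _.
  rewrite connect0; split=> // d12.
  apply/idP/idP => [d13 | d23]; last exact: connect_trans d12 d23.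
  by rewrite (fconnect_sym face_perm_inj) in d12; apply: connect_trans d12 d13.
rewrite (card_partition P_partition) mulnC -sum_nat_const.
apply: leq_sum => A /imsetP[d]; rewrite inE => dd ->.
exact: card_face_orbit_gt2.
Qed.

Lemma embedding_genus_lb g : embedding_genus e rho g ->
  #|[set d | dart e d]| + 12 * num_components e <= 12 * g + 6 * #|T|.
Proof.
rewrite /embedding_genus /num_faces no_isolated_vertices => [|v]; last exact: ltnW.
rewrite addn0.
by have := three_faces_le_darts; lia.
Qed.

End Faces.

Lemma has_genus_euler_bound (T : finType) (e : rel T) rho g :
  symmetric e -> irreflexive e -> (forall v, 1 < #|[set w | e v w]|) ->
  rotation_system e rho -> embedding_genus e rho g ->
  12 * g + 6 * #|T| < #|[set d | dart e d]| + 12 * num_components e + 12 ->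
  has_genus e g.
Proof.
move=> e_sym e_irr deg2 rho_rot rho_g g_min; split; first by exists rho.
by move=> rho' g' /embedding_genus_lb lb /(lb e_sym e_irr deg2); lia.
Qed.

Lemma uniq_flatten_nonempty (T : eqType) (cs : seq (seq T)) :
  all (fun c => c != [::]) cs -> uniq (flatten cs) -> uniq cs.
Proof.
elim: cs => //= c cs IHcs /andP[c0 cs0]; rewrite cat_uniq => /and3P[_ c_cs cs_uniq].
rewrite IHcs // andbT; apply: contra c_cs; case: c c0 => // x c _ c_in.
by apply/hasP; exists x; [apply/flattenP; exists (x :: c) | ]; rewrite ?mem_head.
Qed.

Lemma uniq_flatten_mem (T : eqType) (cs : seq (seq T)) c1 c2 x :
  uniq (flatten cs) -> c1 \in cs -> c2 \in cs -> x \in c1 -> x \in c2 -> c1 = c2.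
Proof.
elim: cs => //= c cs IHcs; rewrite cat_uniq => /and3P[_ c_cs cs_uniq].
rewrite !inE => /orP[/eqP-> | c1_cs] /orP[/eqP-> | c2_cs] // x1 x2.
- by case/hasP: c_cs; exists x => //; apply/flattenP; exists c2.
- by case/hasP: c_cs; exists x => //; apply/flattenP; exists c1.
- exact: IHcs.
Qed.

Section OrbitCycles.
Variables (T : finType) (f : T -> T) (cs : seq (seq T)).
Hypotheses (cs_cycles : all (fcycle f) cs) (cs_uniq : uniq (flatten cs)).
Hypothesis cs_nonempty : all (fun c => c != [::]) cs.

Lemma fconnect_cycles c x :
  c \in cs -> x \in c -> [set y | fconnect f x y] = [set y in c].
Proof.
move=> c_cs xc; apply/setP => y.
by rewrite !inE (fconnect_cycle (allP cs_cycles c c_cs) xc).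
Qed.

Lemma card_orbits_cycles (D : {set T}) :
  D =i flatten cs -> #|[set [set y | fconnect f x y] | x in D]| = size cs.
Proof.
move=> D_cs; set S := fun c : seq T => [set y in c].
have -> : [set [set y | fconnect f x y] | x in D] = [set A in map S cs].
  apply/setP => A; rewrite inE; apply/imsetP/mapP => [[x] | [c c_cs ->]].
  - by rewrite D_cs => /flattenP[c c_cs xc] ->; exists c => //; apply: fconnect_cycles.
  - have := allP cs_nonempty c c_cs; case: c c_cs => // x c c_cs _.
    exists x; last by rewrite (fconnect_cycles c_cs (mem_head x c)).
    by rewrite D_cs; apply/flattenP; exists (x :: c); rewrite ?mem_head.
have S_inj : {in cs &, injective S}.
  move=> c1 c2 c1_cs c2_cs; have := allP cs_nonempty c1 c1_cs.
  case: c1 c1_cs => // x c c1_cs _ S12.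
  apply: (uniq_flatten_mem cs_uniq c1_cs c2_cs (mem_head x c)).
  by rewrite -[x \in c2]inE -/(S c2) -S12 inE mem_head.
rewrite -(size_map S) -(card_uniqP _); last first.
  by rewrite map_inj_in_uniq // uniq_flatten_nonempty.
by apply: eq_card => A; rewrite inE.
Qed.

End OrbitCycles.

(* The faces found by tracing are not trusted: faces_traced verifies them. *)
Definition orbit_trace (T : eqType) (f : T -> T) n x : seq T :=
  let t := traject f (f x) n in x :: take (index x t) t.

Fixpoint trace_cycles (T : eqType) (f : T -> T) n (s : seq T) : seq (seq T) :=
  if n is n'.+1 then
    if s is x :: _ then
      let c := orbit_trace f n x in c :: trace_cycles f n' [seq y <- s | y \notin c]
    else [::]
  else [::].

Lemma trace_cycles_nonempty (T : eqType) (f : T -> T) n s :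
  all (fun c => c != [::]) (trace_cycles f n s).
Proof. by elim: n s => [|n IHn] [|x s] //=; rewrite IHn. Qed.

Section Rotation.
Variables (T : finType) (e : rel T) (nbrs : T -> seq T).
Hypothesis nbrs_perm : forall v, perm_eq (nbrs v) [seq w <- enum T | e v w].

Lemma mem_nbrs v w : (w \in nbrs v) = e v w.
Proof. by rewrite (perm_mem (nbrs_perm v)) mem_filter mem_enum andbT. Qed.

Lemma nbrs_uniq v : uniq (nbrs v).
Proof. by rewrite (perm_uniq (nbrs_perm v)) filter_uniq ?enum_uniq. Qed.

Definition rotate (d : T * T) : T * T := (d.1, next (nbrs d.1) d.2).

Lemma rotate_inj : injective rotate.
Proof. by move=> [u w] [u' w'] [<-] /(can_inj (prev_next (nbrs_uniq u)))->. Qed.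

Definition rotation : {perm T * T} := perm rotate_inj.

Lemma iter_rotation n v w : iter n rotation (v, w) = (v, iter n (next (nbrs v)) w).
Proof. by elim: n => //= n ->; rewrite permE. Qed.

Lemma rotation_system_rotation : rotation_system e rotation.
Proof.
split=> [[v w] | [v w] | [v w1] [v' w2]]; rewrite /dart /= -?mem_nbrs.
- by rewrite permE /rotate next_nth => /negbTE->.
- by rewrite permE /= mem_next.
- move=> w1_v w2_v /= vv'; subst v'.
  have /iter_findex <- : fconnect (next (nbrs v)) w1 w2.
    by rewrite (fconnect_cycle (cycle_next (nbrs_uniq v)) w1_v).
  by rewrite -iter_rotation fconnect_iter.
Qed.

Definition face_step (d : T * T) : T * T :=
  if dart e d then rotate (d.2, d.1) else d.

Lemma face_perm_rotation : face_perm e rotation =1 face_step.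
Proof. by move=> d; rewrite /face_perm /face_step permE. Qed.

Definition darts : seq (T * T) := [seq (v, w) | v <- enum T, w <- nbrs v].

Lemma mem_darts d : (d \in darts) = dart e d.
Proof.
apply/allpairsPdep/idP => [[v [w [_ w_v ->]]] | d_dart].
  by rewrite /dart -mem_nbrs.
by exists d.1, d.2; rewrite mem_enum mem_nbrs; case: d d_dart.
Qed.

Lemma darts_uniq : uniq darts.
Proof.
apply: allpairs_uniq_dep => [|v _|]; rewrite ?enum_uniq ?nbrs_uniq //.
by move=> [v w] [v' w'] _ _ /= [-> ->].
Qed.

Lemma card_darts : #|[set d | dart e d]| = size darts.
Proof.
rewrite -(card_uniqP darts_uniq); apply: eq_card => d.
by rewrite inE mem_darts.
Qed.

Definition faces : seq (seq (T * T)) := trace_cycles face_step (size darts) darts.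

Definition faces_traced : bool :=
  all (fcycle face_step) faces && perm_eq (flatten faces) darts.

Lemma num_faces_rotation : faces_traced ->
  num_faces e rotation = size faces + #|[set v | [forall w, ~~ e v w]]|.
Proof.
case/andP => faces_cycles faces_darts; rewrite /num_faces; congr (_ + _).
set D := [set d | dart e d].
have -> : [set [set d' | fconnect (face_perm e rotation) d d'] | d in D]
        = [set [set d' | fconnect face_step d d'] | d in D].
  apply: eq_imset => d; apply/setP => d'.
  by rewrite !inE (eq_fconnect face_perm_rotation).
apply: (card_orbits_cycles faces_cycles _ (trace_cycles_nonempty _ _ _)).
- by rewrite (perm_uniq faces_darts) darts_uniq.
- by move=> d; rewrite inE (perm_mem faces_darts) mem_darts.
Qed.

End Rotation.

Lemma has_genus_rotation (T : finType) (e : rel T) (nbrs : T -> seq T) k g :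
  simple_graph e -> 1 < k -> k_connected e k ->
  (forall v, perm_eq (nbrs v) [seq w <- enum T | e v w]) -> faces_traced e nbrs ->
  4 * g + 2 * #|T| + 2 * size (faces e nbrs) = 4 + size (darts nbrs) ->
  12 * g + 6 * #|T| < size (darts nbrs) + 24 ->
  has_genus e g.
Proof.
move=> [e_sym e_irr] k_gt1 e_conn nbrs_perm traced euler g_min.
have deg2 v : 1 < #|[set w | e v w]| := leq_trans k_gt1 (k_connected_deg e_irr v e_conn).
have ncomp : num_components e = 1 := k_connected_num_components (ltnW k_gt1) e_conn.
apply: (has_genus_euler_bound e_sym e_irr deg2 (rotation_system_rotation nbrs_perm)).
- rewrite /embedding_genus (num_faces_rotation nbrs_perm traced).
  rewrite no_isolated_vertices => [|v]; last exact: ltnW.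
  by rewrite ncomp muln1 addn0 (card_darts nbrs_perm); exact: euler.
- by rewrite (card_darts nbrs_perm) ncomp muln1 -addnA.
Qed.

Lemma vertex_connectivity_and_genus (T : finType) (e : rel T) (nbrs : T -> seq T) v k g :
  simple_graph e -> 1 < k < #|T| ->
  (forall x y, k_linked e k x y) -> #|[set w | e v w]| <= k ->
  (forall v, perm_eq (nbrs v) [seq w <- enum T | e v w]) -> faces_traced e nbrs ->
  4 * g + 2 * #|T| + 2 * size (faces e nbrs) = 4 + size (darts nbrs) ->
  12 * g + 6 * #|T| < size (darts nbrs) + 24 ->
  vertex_connectivity e k /\ has_genus e g.
Proof.
move=> e_simple /andP[k_gt1 kT] linked deg_v nbrs_perm traced euler g_min.
have e_conn := vertex_connectivity_deg e_simple.2 kT linked deg_v.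
by split=> //; apply: (has_genus_rotation e_simple k_gt1 e_conn.1).
Qed.

Lemma graph_iso_card (T1 T2 : finType) (e1 : rel T1) (e2 : rel T2) :
  graph_iso e1 e2 -> #|T1| = #|T2|.
Proof. by case=> f [/bij_eq_card]. Qed.

Lemma K_simple n : simple_graph (K n).
Proof. by split=> [i j | i]; rewrite /K ?eqxx // eq_sym. Qed.

(* Finite.enum is locked, so enum 'I_n.+1 is made explicit before evaluation. *)
Ltac evaluate :=
  rewrite ?card_ord ?card_set_count;
  unfold k_linked, common_nbrs, faces_traced, faces, darts;
  rewrite ?enum_ordE; vm_compute; reflexivity.

Definition ord_nbrs n (R : seq (seq nat)) (v : 'I_n.+1) : seq 'I_n.+1 :=
  [seq inZp w | w <- nth [::] R v].

(* Row v lists the neighbours of vertex v in their cyclic order around v. *)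
Definition K10_rotation : seq (seq nat) :=
  [:: [:: 1; 9; 3; 5; 7; 8; 4; 6; 2];
     [:: 0; 5; 6; 3; 4; 8; 7; 2; 9];
     [:: 0; 6; 8; 9; 1; 7; 4; 3; 5];
     [:: 0; 9; 5; 2; 4; 1; 6; 7; 8];
     [:: 0; 8; 1; 3; 2; 7; 5; 9; 6];
     [:: 0; 8; 6; 1; 2; 3; 9; 4; 7];
     [:: 0; 4; 9; 7; 3; 1; 5; 8; 2];
     [:: 0; 5; 4; 2; 1; 8; 3; 6; 9];
     [:: 0; 9; 2; 6; 5; 3; 7; 1; 4];
     [:: 0; 1; 2; 8; 7; 6; 4; 5; 3]].

Definition K12_minus_C12_rotation : seq (seq nat) :=
  [:: [:: 2; 4; 8; 6; 9; 3; 10; 5; 7];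
     [:: 3; 6; 4; 9; 5; 10; 7; 11; 8];
     [:: 0; 7; 10; 6; 8; 5; 9; 11; 4];
     [:: 0; 9; 7; 5; 11; 6; 1; 8; 10];
     [:: 0; 2; 11; 7; 9; 1; 6; 10; 8];
     [:: 0; 10; 1; 9; 2; 8; 11; 3; 7];
     [:: 0; 8; 2; 10; 4; 1; 3; 11; 9];
     [:: 0; 5; 3; 9; 4; 11; 1; 10; 2];
     [:: 0; 4; 10; 3; 1; 11; 5; 2; 6];
     [:: 0; 6; 11; 2; 5; 1; 4; 7; 3];
     [:: 0; 3; 8; 4; 6; 2; 7; 1; 5];
     [:: 1; 7; 4; 2; 9; 6; 3; 5; 8]].

Definition K14_rotation : seq (seq nat) :=
  [:: [:: 1; 5; 3; 13; 7; 2; 8; 10; 9; 6; 12; 11; 4];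
     [:: 0; 5; 6; 8; 3; 9; 13; 11; 10; 12; 2; 4; 7];
     [:: 0; 7; 11; 8; 6; 3; 5; 13; 4; 1; 12; 9; 10];
     [:: 0; 5; 2; 6; 9; 1; 8; 10; 11; 7; 4; 12; 13];
     [:: 0; 11; 6; 10; 8; 12; 3; 7; 1; 2; 13; 9; 5];
     [:: 0; 7; 10; 6; 1; 4; 9; 11; 12; 8; 13; 2; 3];
     [:: 0; 9; 3; 2; 8; 1; 5; 10; 4; 11; 13; 7; 12];
     [:: 0; 8; 9; 12; 6; 13; 10; 5; 1; 4; 3; 11; 2];
     [:: 0; 10; 3; 1; 6; 2; 11; 9; 7; 13; 5; 12; 4];
     [:: 0; 10; 2; 12; 7; 8; 11; 5; 4; 13; 1; 3; 6];
     [:: 0; 4; 6; 5; 7; 13; 12; 1; 11; 3; 8; 2; 9];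
     [:: 0; 12; 5; 9; 8; 2; 7; 3; 10; 1; 13; 6; 4];
     [:: 0; 6; 7; 9; 2; 1; 10; 13; 3; 4; 8; 5; 11];
     [:: 0; 3; 12; 10; 7; 6; 11; 1; 9; 4; 2; 5; 8]].

Definition K15_minus_6K2_rotation : seq (seq nat) :=
  [:: [:: 2; 14; 13; 7; 12; 10; 5; 6; 9; 11; 3; 4; 8];
     [:: 2; 13; 14; 3; 12; 4; 10; 6; 5; 8; 11; 7; 9];
     [:: 0; 8; 5; 12; 6; 13; 1; 9; 10; 7; 11; 4; 14];
     [:: 0; 11; 6; 12; 1; 14; 5; 9; 13; 10; 8; 7; 4];
     [:: 0; 3; 7; 10; 1; 12; 9; 6; 14; 2; 11; 13; 8];
     [:: 0; 10; 9; 3; 14; 7; 13; 11; 12; 2; 8; 1; 6];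
     [:: 0; 5; 1; 10; 13; 2; 12; 3; 11; 8; 14; 4; 9];
     [:: 0; 13; 5; 14; 9; 1; 11; 2; 10; 4; 3; 8; 12];
     [:: 0; 4; 13; 12; 7; 3; 10; 14; 6; 11; 1; 5; 2];
     [:: 0; 6; 4; 12; 13; 3; 5; 10; 2; 1; 7; 14; 11];
     [:: 0; 12; 14; 8; 3; 13; 6; 1; 4; 7; 2; 9; 5];
     [:: 0; 9; 14; 12; 5; 13; 4; 2; 7; 1; 8; 6; 3];
     [:: 0; 7; 8; 13; 9; 4; 1; 3; 6; 2; 5; 11; 14; 10];
     [:: 0; 14; 1; 2; 6; 10; 3; 9; 12; 8; 4; 11; 5; 7];
     [:: 0; 2; 4; 6; 8; 10; 12; 11; 9; 7; 5; 3; 1; 13]].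

Lemma K10_certified : vertex_connectivity (K 10) 9 /\ has_genus (K 10) 4.
Proof.
apply: (vertex_connectivity_and_genus (v := ord0)
    (nbrs := ord_nbrs K10_rotation)
    (K_simple 10) _ (forall2_enum _) _ (forall_enum _)); evaluate.
Qed.

Lemma K12_minus_C12_simple : simple_graph K12_minus_C12.
Proof. by apply: simple_graph_enum; evaluate. Qed.

Lemma K12_minus_C12_certified :
  vertex_connectivity K12_minus_C12 9 /\ has_genus K12_minus_C12 4.
Proof.
apply: (vertex_connectivity_and_genus (v := ord0)
    (nbrs := ord_nbrs K12_minus_C12_rotation)
    K12_minus_C12_simple _ (forall2_enum _) _ (forall_enum _)); evaluate.
Qed.

Lemma K14_certified : vertex_connectivity (K 14) 13 /\ has_genus (K 14) 10.
Proof.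
apply: (vertex_connectivity_and_genus (v := ord0)
    (nbrs := ord_nbrs K14_rotation)
    (K_simple 14) _ (forall2_enum _) _ (forall_enum _)); evaluate.
Qed.

Lemma K15_minus_6K2_simple : simple_graph K15_minus_6K2.
Proof. by apply: simple_graph_enum; evaluate. Qed.

Lemma K15_minus_6K2_certified :
  vertex_connectivity K15_minus_6K2 13 /\ has_genus K15_minus_6K2 10.
Proof.
apply: (vertex_connectivity_and_genus (v := ord0)
    (nbrs := ord_nbrs K15_minus_6K2_rotation)
    K15_minus_6K2_simple _ (forall2_enum _) _ (forall_enum _)); evaluate.
Qed.

Theorem mainTheorem4 :
  [/\ vertex_connectivity (K 10) 9 /\ has_genus (K 10) 4,
      vertex_connectivity K12_minus_C12 9 /\ has_genus K12_minus_C12 4,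
      vertex_connectivity (K 14) 13 /\ has_genus (K 14) 10,
      vertex_connectivity K15_minus_6K2 13 /\ has_genus K15_minus_6K2 10
    & (exists (T : finType) (e : rel T),
         [/\ simple_graph e, vertex_connectivity e 9, has_genus e 4
           & ~ graph_iso e (K 10)]) /\
      (exists (T : finType) (e : rel T),
         [/\ simple_graph e, vertex_connectivity e 13, has_genus e 10
           & ~ graph_iso e (K 14)])].
Proof.
have [K12_conn K12_genus] := K12_minus_C12_certified.
have [K15_conn K15_genus] := K15_minus_6K2_certified.
split; [exact: K10_certified | by [] | exact: K14_certified | by [] | split].
- exists 'I_12, K12_minus_C12; split=> //; first exact: K12_minus_C12_simple.
  by move/graph_iso_card; rewrite !card_ord.
- exists 'I_15, K15_minus_6K2; split=> //; first exact: K15_minus_6K2_simple.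
  by move/graph_iso_card; rewrite !card_ord.
Qed.
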